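(* In the following setting: $n$ training samples with labels in $\{1,\dots,K\}$, indicator matrix $F\in\mathbb{R}^{K\times n}$, $n_k$ samples in class $k$; basis $G_1,\dots,G_r$ ($r\le n$) a subset of the training samples with $r_k\ge1$ basis vectors in class $k$; $F_{G_i}$ the class indicator of $G_i$; $\tilde W\in\mathbb{R}^{r\times n}$ entrywise nonnegative, columns summing to one, full row rank, with $\tilde W_{ij}=0$ whenever $F_{G_i}\neq F_j$; $\tilde W'=\tilde W+\Delta W$ with $\Delta W\in\mathbb{R}^{r\times n}$; $\xi=\|\tilde W^\dagger\|_2\|\Delta W\|_2$, $\delta=\|\Delta W\|_F/\|\tilde W\|_F$, $n_\rho=\sqrt{\max_kn_k/\min_kn_k}$, $r_\rho=\sqrt{\max_kr_k/\min_kr_k}$; $X=F\tilde W^\dagger$, $X'=F\tilde W'^\dagger$, $\gamma=\|X\|_F^2\|\tilde W\|_F^2/\|X\tilde W\|_F^2$, $\gamma'=\|X'\|_F^2\|\tilde W'\|_F^2/\|X'\tilde W'\|_F^2$. If $\xi<1/n_\rho$, then $\delta\le\xi$ and $$\gamma'\le\gamma(1+\delta)^2\Big(\frac{1+r_\rho\xi}{1-n_\rho\xi}\Big)^2\le\gamma\frac{(1+r_\rho\xi)^4}{(1-n_\rho\xi)^2}.$$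
   Context: The columns of $F$ are standard basis vectors of $\mathbb{R}^K$: $F_j=e_k$ iff sample $j$ is in class $k$. $\|\cdot\|_2$ of a matrix is the spectral norm; $M^\dagger$ is the Moore–Penrose pseudo-inverse. *)

From HB Require Import structures.
From mathcomp Require Import all_boot all_order all_algebra.
From mathcomp Require Import classical_sets reals.
Set Implicit Arguments. Unset Strict Implicit. Unset Printing Implicit Defensive.
Import Order.TTheory GRing.Theory Num.Theory.
Local Open Scope ring_scope.
Local Open Scope classical_set_scope.

Definition fnorm (R : realType) (m n : nat) (A : 'M[R]_(m, n)) : R :=
  Num.sqrt (\sum_(i < m) \sum_(j < n) A i j ^+ 2).

Definition snorm (R : realType) (m n : nat) (A : 'M[R]_(m, n)) : R :=
  sup [set fnorm (A *m x) | x in [set x : 'cV[R]_n | fnorm x <= 1]].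

(* B is the Moore--Penrose pseudo-inverse of A (the four Penrose equations;
   such B exists and is unique). *)
Definition is_pinv (R : realType) (m n : nat)
    (A : 'M[R]_(m, n)) (B : 'M[R]_(n, m)) : Prop :=
  [/\ A *m B *m A = A, B *m A *m B = B,
      (A *m B)^T = A *m B & (B *m A)^T = B *m A].

Definition indicator (R : realType) (K n : nat) (y : 'I_n -> 'I_K) : 'M[R]_(K, n) :=
  \matrix_(k < K, j < n) (y j == k)%:R.

Definition ncls (K n : nat) (y : 'I_n -> 'I_K) (k : 'I_K) : nat :=
  #|[set j | y j == k]|.

Definition ratio_rho (R : realType) (K : nat) (c : 'I_K -> nat) : R :=
  let cmax := (\max_(k < K) c k)%N in
  let cmin := \big[minn/cmax]_(k < K) c k in
  Num.sqrt (cmax%:R / cmin%:R).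

Definition gammaF (R : realType) (K r n : nat)
    (X : 'M[R]_(K, r)) (W : 'M[R]_(r, n)) : R :=
  fnorm X ^+ 2 * fnorm W ^+ 2 / fnorm (X *m W) ^+ 2.

(* Full row rank gives W W^+ = 1, and the class constraints on W give F = G W
   with G the class indicator of the basis, so X = F W^+ satisfies X W = F.
   For W' = W + dW with xi < 1, W' also has W' W'^+ = 1, and P = W'^+ W' is an
   orthogonal projection.  With A = X dW one finds X' = X - A W'^+,
   X' W' = F P, |F P|^2 = |F|^2 - |A - A P|^2 and
   (1 - xi) |A W'^+| <= |W^+|_2 |A P|, while |A P|^2 + |A - A P|^2 <= (|X| |dW|_2)^2.
   An elementary inequality then gives
   |X'|^2 / |X' W'|^2 <= |X|^2 / |F|^2 ((1 + xi) / (1 - xi))^2, and with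
   |W'| <= |W| (1 + delta) this is gamma' <= gamma (1 + delta)^2 ((1 + xi) / (1 - xi))^2.
   The class-balance ratios only enter when weakening this bound, through
   n_rho, r_rho >= 1. *)

From HB Require Import structures.
From mathcomp Require Import all_boot all_order all_algebra.
From mathcomp Require Import classical_sets reals.
From mathcomp Require Import ring lra.
Import Order.TTheory GRing.Theory Num.Theory.
Local Open Scope ring_scope.

Set Implicit Arguments. Unset Strict Implicit. Unset Printing Implicit Defensive.

Section FrobeniusNorm.
Variable R : realType.

Definition fdot m n (A B : 'M[R]_(m, n)) := \sum_(i < m) \sum_(j < n) A i j * B i j.

Lemma fdotC m n (A B : 'M[R]_(m, n)) : fdot A B = fdot B A.
Proof. by apply: eq_bigr => i _; apply: eq_bigr => j _; rewrite mulrC. Qed.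

Lemma fdotDl m n (A B C : 'M[R]_(m, n)) : fdot (A + B) C = fdot A C + fdot B C.
Proof.
rewrite /fdot -big_split; apply: eq_bigr => i _; rewrite -big_split.
by apply: eq_bigr => j _; rewrite !mxE mulrDl.
Qed.

Lemma fdotZl m n a (A B : 'M[R]_(m, n)) : fdot (a *: A) B = a * fdot A B.
Proof.
rewrite /fdot mulr_sumr; apply: eq_bigr => i _; rewrite mulr_sumr.
by apply: eq_bigr => j _; rewrite !mxE mulrA.
Qed.

Lemma fdot_trace m n (A B : 'M[R]_(m, n)) : fdot A B = \tr (A *m B^T).
Proof.
by apply: eq_bigr => i _; rewrite !mxE; apply: eq_bigr => j _; rewrite mxE.
Qed.

Lemma fdot_mulmxl m n p (A : 'M[R]_(m, n)) (B : 'M[R]_(n, p)) (C : 'M[R]_(m, p)) :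
  fdot (A *m B) C = fdot B (A^T *m C).
Proof.
by rewrite !fdot_trace trmx_mul trmxK -mulmxA mxtrace_mulC -mulmxA.
Qed.

Lemma fnorm_ge0 m n (A : 'M[R]_(m, n)) : 0 <= fnorm A.
Proof. exact: sqrtr_ge0. Qed.

Lemma fnorm_sqrE m n (A : 'M[R]_(m, n)) :
  fnorm A ^+ 2 = \sum_(i < m) \sum_(j < n) A i j ^+ 2.
Proof. by rewrite sqr_sqrtr //; do 2![apply: sumr_ge0 => ? _]; apply: sqr_ge0. Qed.

Lemma fnorm_sqr m n (A : 'M[R]_(m, n)) : fnorm A ^+ 2 = fdot A A.
Proof.
by rewrite fnorm_sqrE; apply: eq_bigr => i _; apply: eq_bigr => j _; rewrite expr2.
Qed.

Lemma fnorm_eq0 m n (A : 'M[R]_(m, n)) : (fnorm A == 0) = (A == 0).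
Proof.
apply/idP/eqP => [|->]; last first.
  by rewrite /fnorm big1 ?sqrtr0 // => i _; rewrite big1 // => j _; rewrite mxE expr0n.
rewrite -sqrf_eq0 fnorm_sqr => /eqP A0; apply/matrixP => i j; rewrite mxE.
have ge0 k l : 0 <= A k l * A k l by rewrite -expr2 sqr_ge0.
have rowge0 k : 0 <= \sum_(l < n) A k l * A k l by apply: sumr_ge0 => l _.
have Ai0 := psumr_eq0P (fun k _ => rowge0 k) A0 (i := i) isT.
have /eqP := psumr_eq0P (fun l _ => ge0 i l) Ai0 (i := j) isT.
by rewrite mulf_eq0 orbb => /eqP.
Qed.

Lemma fnorm0 m n : fnorm (0 : 'M[R]_(m, n)) = 0.
Proof. by apply/eqP; rewrite fnorm_eq0. Qed.

Lemma fnormZ m n a (A : 'M[R]_(m, n)) : fnorm (a *: A) = `|a| * fnorm A.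
Proof.
rewrite /fnorm -sqrtr_sqr -sqrtrM ?sqr_ge0 // mulr_sumr; congr Num.sqrt.
by apply: eq_bigr => i _; rewrite mulr_sumr; apply: eq_bigr => j _; rewrite mxE exprMn.
Qed.

Lemma fnorm_sqrD m n (A B : 'M[R]_(m, n)) :
  fnorm (A + B) ^+ 2 = fnorm A ^+ 2 + 2 * fdot A B + fnorm B ^+ 2.
Proof. by rewrite !fnorm_sqr !fdotDl ![fdot _ (A + B)]fdotC !fdotDl (fdotC B A); ring. Qed.

Lemma fdot_sqr_le m n (A B : 'M[R]_(m, n)) :
  fdot A B ^+ 2 <= fnorm A ^+ 2 * fnorm B ^+ 2.
Proof.
have [->|A0] := eqVneq A 0.
  rewrite /fdot big1 ?expr0n ?mulr_ge0 ?sqr_ge0 ?fnorm_ge0 // => i _.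
  by rewrite big1 // => j _; rewrite mxE mul0r.
have a_neq0 : fnorm A != 0 by rewrite fnorm_eq0.
have a_gt0 : 0 < fnorm A ^+ 2 by rewrite exprn_gt0 // lt_def a_neq0 fnorm_ge0.
pose t := fdot A B / fnorm A ^+ 2.
have : 0 <= fnorm (B + (- t) *: A) ^+ 2 by apply: sqr_ge0.
rewrite fnorm_sqrD fnormZ exprMn real_normK ?num_real // fdotC fdotZl.
have -> : fnorm B ^+ 2 + 2 * (- t * fdot A B) + (- t) ^+ 2 * fnorm A ^+ 2 =
          fnorm B ^+ 2 - fdot A B ^+ 2 / fnorm A ^+ 2.
  by rewrite /t; field.
by rewrite subr_ge0 ler_pdivrMr // mulrC.
Qed.

Lemma fdot_le_fnorm m n (A B : 'M[R]_(m, n)) : fdot A B <= fnorm A * fnorm B.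
Proof.
have := fdot_sqr_le A B; rewrite -exprMn.
by have := mulr_ge0 (fnorm_ge0 A) (fnorm_ge0 B); nra.
Qed.

Lemma fnormD m n (A B : 'M[R]_(m, n)) : fnorm (A + B) <= fnorm A + fnorm B.
Proof.
rewrite -ler_sqr ?nnegrE ?addr_ge0 ?fnorm_ge0 // fnorm_sqrD.
by have := fdot_le_fnorm A B; nra.
Qed.

Lemma fnormN m n (A : 'M[R]_(m, n)) : fnorm (- A) = fnorm A.
Proof. by rewrite -scaleN1r fnormZ normrN normr1 mul1r. Qed.

Lemma fnormB m n (A B : 'M[R]_(m, n)) : fnorm (A - B) <= fnorm A + fnorm B.
Proof. by rewrite -(fnormN B) fnormD. Qed.

Lemma fnorm_tr m n (A : 'M[R]_(m, n)) : fnorm A^T = fnorm A.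
Proof.
rewrite /fnorm exchange_big; congr Num.sqrt.
by apply: eq_bigr => i _; apply: eq_bigr => j _; rewrite mxE.
Qed.

Lemma fnorm_sqr_rows m n (A : 'M[R]_(m, n)) :
  fnorm A ^+ 2 = \sum_(i < m) fnorm (row i A) ^+ 2.
Proof.
rewrite fnorm_sqrE; apply: eq_bigr => i _.
by rewrite fnorm_sqrE big_ord1; apply: eq_bigr => j _; rewrite mxE.
Qed.

Lemma fnorm_sqr_cols m n (A : 'M[R]_(m, n)) :
  fnorm A ^+ 2 = \sum_(j < n) fnorm (col j A) ^+ 2.
Proof.
rewrite fnorm_sqrE exchange_big; apply: eq_bigr => j _.
by rewrite fnorm_sqrE; apply: eq_bigr => i _; rewrite big_ord1 mxE.
Qed.

Lemma fnorm_mulmx_le m n p (A : 'M[R]_(m, n)) (B : 'M[R]_(n, p)) :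
  fnorm (A *m B) <= fnorm A * fnorm B.
Proof.
rewrite -ler_sqr ?nnegrE ?mulr_ge0 ?fnorm_ge0 // exprMn fnorm_sqrE.
rewrite fnorm_sqr_rows fnorm_sqr_cols mulr_suml; apply: ler_sum => i _.
rewrite mulr_sumr; apply: ler_sum => j _; rewrite -(fnorm_tr (col j B)).
have -> : (A *m B) i j = fdot (row i A) (col j B)^T.
  by rewrite mxE /fdot big_ord1; apply: eq_bigr => k _; rewrite !mxE.
exact: fdot_sqr_le.
Qed.

Lemma fnorm_sqr_proj m n (M : 'M[R]_(m, n)) (P : 'M[R]_n) :
  P^T = P -> P *m P = P ->
  fnorm M ^+ 2 = fnorm (M *m P) ^+ 2 + fnorm (M - M *m P) ^+ 2.
Proof.
move=> P_sym P_idem.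
have orth : fdot (M *m P) (M - M *m P) = 0.
  rewrite fdot_trace linearB /= trmx_mul P_sym mulmxBr -!mulmxA (mulmxA P) P_idem.
  by rewrite subrr linear0.
by rewrite -{1}(subrK (M *m P) M) [_ - _ + _]addrC [LHS]fnorm_sqrD orth mulr0 addr0.
Qed.

End FrobeniusNorm.

Section SpectralNorm.
Variable R : realType.
Local Open Scope classical_set_scope.

Lemma snorm_has_sup m n (A : 'M[R]_(m, n)) :
  has_sup [set fnorm (A *m x) | x in [set x : 'cV[R]_n | fnorm x <= 1]].
Proof.
split; first by exists (fnorm (A *m (0 : 'cV_n))), 0; rewrite /= ?fnorm0 ?ler01.
exists (fnorm A) => _ [x /= x_le1 <-]; apply: le_trans (fnorm_mulmx_le A x) _.
by rewrite ler_piMr ?fnorm_ge0.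
Qed.

Lemma snorm_ge0 m n (A : 'M[R]_(m, n)) : 0 <= snorm A.
Proof.
apply: le_trans (sup_upper_bound (snorm_has_sup A) _); first exact: (fnorm_ge0 (A *m (0 : 'cV_n))).
by exists 0 => //=; rewrite [fnorm _]fnorm0 ler01.
Qed.

Lemma fnorm_mulmx_snorm m n (A : 'M[R]_(m, n)) (x : 'cV[R]_n) :
  fnorm (A *m x) <= snorm A * fnorm x.
Proof.
have [x0|x_neq0] := eqVneq x 0; first by rewrite x0 mulmx0 !fnorm0 mulr0.
have x_gt0 : 0 < fnorm x by rewrite lt_def fnorm_eq0 x_neq0 fnorm_ge0.
rewrite -ler_pdivrMr // mulrC -[(fnorm x)^-1]ger0_norm ?invr_ge0 ?fnorm_ge0 //.
rewrite -fnormZ scalemxAr; apply: (sup_upper_bound (snorm_has_sup A)); apply: imageP.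
by rewrite /= fnormZ ger0_norm ?invr_ge0 ?fnorm_ge0 ?mulVf ?gt_eqF.
Qed.

Lemma snorm_le m n (A : 'M[R]_(m, n)) c : 0 <= c ->
  (forall x : 'cV[R]_n, fnorm (A *m x) <= c * fnorm x) -> snorm A <= c.
Proof.
move=> c_ge0 Ac; apply: ge_sup; first by case: (snorm_has_sup A).
by move=> _ [x /= x_le1 <-]; apply: le_trans (Ac x) _; rewrite ler_piMr.
Qed.

Lemma fnorm_mulmxl_le m n p (A : 'M[R]_(m, n)) (B : 'M[R]_(n, p)) :
  fnorm (A *m B) <= snorm A * fnorm B.
Proof.
rewrite -ler_sqr ?nnegrE ?mulr_ge0 ?snorm_ge0 ?fnorm_ge0 //.
rewrite exprMn !fnorm_sqr_cols mulr_sumr; apply: ler_sum => j _.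
rewrite !colE -mulmxA -exprMn ler_sqr ?nnegrE ?mulr_ge0 ?snorm_ge0 ?fnorm_ge0 //.
exact: fnorm_mulmx_snorm.
Qed.

Lemma snorm_tr_le m n (A : 'M[R]_(m, n)) : snorm A <= snorm A^T.
Proof.
apply: snorm_le (snorm_ge0 _) _ => x.
have [Ax0|Ax_neq0] := eqVneq (fnorm (A *m x)) 0.
  by rewrite Ax0 mulr_ge0 ?snorm_ge0 ?fnorm_ge0.
have Ax_gt0 : 0 < fnorm (A *m x) by rewrite lt_def Ax_neq0 fnorm_ge0.
rewrite -(ler_pM2r Ax_gt0) -expr2 fnorm_sqr fdot_mulmxl.
apply: le_trans (fdot_le_fnorm _ _) _; rewrite [leRHS]mulrAC [leRHS]mulrC ler_wpM2l ?fnorm_ge0 //.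
exact: fnorm_mulmx_snorm.
Qed.

Lemma snorm_tr m n (A : 'M[R]_(m, n)) : snorm A^T = snorm A.
Proof. by apply/eqP; rewrite eq_le snorm_tr_le -{2}(trmxK A) snorm_tr_le. Qed.

Lemma fnorm_mulmxr_le m n p (A : 'M[R]_(m, n)) (B : 'M[R]_(n, p)) :
  fnorm (A *m B) <= fnorm A * snorm B.
Proof.
by rewrite -fnorm_tr trmx_mul -(fnorm_tr A) -(snorm_tr B) mulrC fnorm_mulmxl_le.
Qed.

End SpectralNorm.

Lemma mulmx_pinv_row_free (F : fieldType) m n (A : 'M[F]_(m, n)) (B : 'M[F]_(n, m)) :
  row_free A -> A *m B *m A = A -> A *m B = 1%:M.
Proof. by move=> /row_freeP [C A_C] ABA; rewrite -[A *m B]mulmx1 -A_C mulmxA ABA. Qed.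

Section ScalarBounds.
Variable R : realType.

Lemma perturbation_sqr_le (s e u f a b c x : R) :
  0 <= s -> 0 <= e -> s * e < 1 -> 0 <= u -> 0 <= a -> 0 <= x ->
  a ^+ 2 + c ^+ 2 <= (u * e) ^+ 2 -> u <= s * f ->
  x <= u + b -> (1 - s * e) * b <= s * a ->
  ((1 - s * e) * x * f) ^+ 2 <= ((1 + s * e) * u) ^+ 2 * (f ^+ 2 - c ^+ 2).
Proof.
move=> s_ge0 e_ge0 xi_lt1 u_ge0 a_ge0 x_ge0 ac_le u_le x_le b_le.
have a_le : a <= u * e.
  by rewrite -ler_sqr ?nnegrE ?mulr_ge0 //; have := sqr_ge0 c; lra.
set xi := s * e in xi_lt1 b_le *; set q := s * a in b_le.
have xi_ge0 : 0 <= xi by rewrite mulr_ge0.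
have q_ge0 : 0 <= q by rewrite mulr_ge0.
have q_le : q <= u * xi by rewrite /q /xi mulrCA ler_wpM2l.
have xi'_ge0 : 0 <= 1 - xi by rewrite subr_ge0 ltW.
have x_le' : (1 - xi) * x <= (1 - xi) * u + q.
  by have := ler_wpM2l xi'_ge0 x_le; lra.
have c_le : u ^+ 2 * c ^+ 2 <= f ^+ 2 * ((u * xi) ^+ 2 - q ^+ 2).
  have sc_le : s ^+ 2 * c ^+ 2 <= (u * xi) ^+ 2 - q ^+ 2.
    by have := ler_wpM2l (sqr_ge0 s) ac_le; rewrite /q /xi !exprMn; nra.
  have u2_le : u ^+ 2 <= s ^+ 2 * f ^+ 2.
    by rewrite -exprMn ler_sqr ?nnegrE //; apply: le_trans u_le.
  by have := ler_wpM2r (sqr_ge0 c) u2_le; have := ler_wpM2l (sqr_ge0 f) sc_le; nra.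
have poly_le :
    ((1 - xi) * u + q) ^+ 2 <= (1 + xi) ^+ 2 * (u ^+ 2 * (1 - xi ^+ 2) + q ^+ 2).
  have h1 : 0 <= (1 - xi) * u * (u * xi - q) by rewrite !mulr_ge0 // subr_ge0.
  have h2 : 0 <= (1 - xi) * u ^+ 2 * (2 * xi + 3 * xi ^+ 2 + xi ^+ 3).
    by apply: mulr_ge0; [rewrite mulr_ge0 ?sqr_ge0 | rewrite !addr_ge0 ?mulr_ge0 ?exprn_ge0].
  have h3 : 0 <= q ^+ 2 * (2 * xi + xi ^+ 2).
    by rewrite mulr_ge0 ?sqr_ge0 ?addr_ge0 ?mulr_ge0.
  (* the right-hand side minus the left-hand side is [2 * h1 + h2 + h3] *)
  nra.
have x2_le : ((1 - xi) * x) ^+ 2 <= ((1 - xi) * u + q) ^+ 2.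
  by have := mulr_ge0 xi'_ge0 x_ge0; nra.
have := ler_wpM2r (sqr_ge0 f) (le_trans x2_le poly_le).
by rewrite exprMn; nra.
Qed.

Lemma sqr_ratio_le (k l x u f c : R) : 0 < k ->
  (k * x * f) ^+ 2 <= (l * u) ^+ 2 * (f ^+ 2 - c ^+ 2) ->
  x ^+ 2 / (f ^+ 2 - c ^+ 2) <= u ^+ 2 / f ^+ 2 * (l / k) ^+ 2.
Proof.
move=> k_gt0 key.
have [z_le0|z_gt0] := lerP (f ^+ 2 - c ^+ 2) 0.
  apply: le_trans (_ : 0 <= _); first by rewrite mulr_ge0_le0 ?sqr_ge0 ?invr_le0.
  by rewrite mulr_ge0 ?divr_ge0 ?sqr_ge0.
have f_neq0 : f != 0.
  by apply: contraTneq z_gt0 => ->; rewrite expr0n sub0r oppr_gt0 -leNgt sqr_ge0.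
have -> : u ^+ 2 / f ^+ 2 * (l / k) ^+ 2 =
          (l * u) ^+ 2 * (f ^+ 2 - c ^+ 2) / (k * f) ^+ 2 / (f ^+ 2 - c ^+ 2).
  by field; rewrite (gt_eqF z_gt0) (gt_eqF k_gt0) f_neq0.
apply: ler_wpM2r; first by rewrite invr_ge0 ltW.
rewrite ler_pdivlMr; last by rewrite lt_def sqr_ge0 sqrf_eq0 andbT mulf_neq0 // gt_eqF.
by rewrite -exprMn mulrCA mulrA.
Qed.

Lemma perturbation_factor_le (xi rr nr : R) :
  0 <= xi -> 1 <= rr -> 1 <= nr -> nr * xi < 1 ->
  (1 + xi) / (1 - xi) <= (1 + rr * xi) / (1 - nr * xi).
Proof.
move=> xi_ge0 rr_ge1 nr_ge1 nxi_lt1.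
have xi_le_n : xi <= nr * xi by rewrite ler_peMl.
have xi_le_r : xi <= rr * xi by rewrite ler_peMl.
rewrite ler_pdivrMr ?subr_gt0 ?(le_lt_trans xi_le_n) // mulrAC.
rewrite ler_pdivlMr ?subr_gt0 //; nra.
Qed.

Lemma perturbation_bound_weaken (g d xi rr nr : R) :
  0 <= g -> 0 <= d <= xi -> 1 <= rr -> nr * xi < 1 ->
  g * (1 + d) ^+ 2 * ((1 + rr * xi) / (1 - nr * xi)) ^+ 2 <=
  g * (1 + rr * xi) ^+ 4 / (1 - nr * xi) ^+ 2.
Proof.
move=> g_ge0 /andP[d_ge0 d_le] rr_ge1 nxi_lt1.
have xi_ge0 := le_trans d_ge0 d_le.
have d_le_r : d <= rr * xi by apply: le_trans d_le _; rewrite ler_peMl.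
have -> : g * (1 + rr * xi) ^+ 4 / (1 - nr * xi) ^+ 2 =
          g * (1 + rr * xi) ^+ 2 * ((1 + rr * xi) / (1 - nr * xi)) ^+ 2.
  by rewrite expr_div_n; ring.
by rewrite ler_wpM2r ?sqr_ge0 // ler_wpM2l // ler_sqr ?nnegrE; lra.
Qed.

End ScalarBounds.

Lemma ratio_rho_ge1 (R : realType) K (c : 'I_K -> nat) :
  (0 < K)%N -> (forall k, 0 < c k)%N -> 1 <= ratio_rho R c.
Proof.
move=> K_gt0 c_gt0; rewrite /ratio_rho /=.
set cmax := (\max_(k < K) c k)%N; set cmin := \big[minn/cmax]_(k < K) c k.
have cmax_gt0 : (0 < cmax)%N.
  exact: leq_trans (c_gt0 (Ordinal K_gt0)) (leq_bigmax (Ordinal K_gt0)).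
have cmin_le : (cmin <= cmax)%N.
  apply: (big_ind (fun x => x <= cmax)%N) => // [x1 x2 le1 _|i _].
    by rewrite geq_min le1.
  exact: leq_bigmax.
have cmin_gt0 : (0 < cmin)%N.
  by apply: (big_ind (fun x => 0 < x)%N) => // x1 x2 ? ?; rewrite leq_min; apply/andP.
by rewrite -[X in X <= _]sqrtr1 ler_sqrt ?divr_ge0 // ler_pdivlMr ?ltr0n // mul1r ler_nat.
Qed.

Lemma indicator_mulmx (R : realType) K r n (y : 'I_n -> 'I_K) (g : 'I_r -> 'I_n)
    (W : 'M[R]_(r, n)) :
  (forall j, \sum_(i < r) W i j = 1) ->
  (forall i j, y (g i) != y j -> W i j = 0) ->
  indicator R y = indicator R (fun i => y (g i)) *m W.
Proof.
move=> W_sum W_supp; apply/matrixP => k j; rewrite !mxE.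
have [<-|yj_neq] := eqVneq (y j) k.
  rewrite -(W_sum j); apply: eq_bigr => i _; rewrite mxE /=.
  have [_|ygi_neq] := eqVneq (y (g i)) (y j); first by rewrite mul1r.
  by rewrite mul0r W_supp.
rewrite big1 // => i _; rewrite mxE /=.
have [ygi_k|] := eqVneq (y (g i)) k; last by rewrite mul0r.
by rewrite W_supp ?mulr0 // ygi_k eq_sym.
Qed.

Section Perturbation.
Variables (R : realType) (r n : nat) (W dW : 'M[R]_(r, n)) (Wp Wp' : 'M[R]_(n, r)).
Hypothesis W_Wp : W *m Wp = 1%:M.
Local Notation xi := (snorm Wp * snorm dW).

Lemma fnorm_perturbation_le : fnorm dW <= fnorm W * xi.
Proof.
rewrite {1}(_ : dW = W *m Wp *m dW) ?mulrA; last by rewrite W_Wp mul1mx.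
apply: le_trans (fnorm_mulmxr_le _ _) _.
by rewrite ler_wpM2r ?snorm_ge0 ?fnorm_mulmxr_le.
Qed.

Lemma fnorm_rel_perturbation_le : fnorm dW / fnorm W <= xi.
Proof.
have [W0|W_neq0] := eqVneq (fnorm W) 0.
  by rewrite W0 invr0 mulr0 mulr_ge0 ?snorm_ge0.
by rewrite ler_pdivrMr ?lt_def ?W_neq0 ?fnorm_ge0 // mulrC fnorm_perturbation_le.
Qed.

Lemma fnorm_perturbed_le : fnorm (W + dW) <= fnorm W * (1 + fnorm dW / fnorm W).
Proof.
apply: le_trans (fnormD _ _) _; rewrite mulrDr mulr1 lerD2l.
have [W0|W_neq0] := eqVneq (fnorm W) 0; last by rewrite mulrC divfK.
by have := fnorm_perturbation_le; rewrite W0 !mul0r.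
Qed.

Hypothesis W'_pinv : is_pinv (W + dW) Wp'.
Hypothesis xi_lt1 : xi < 1.

Lemma mulmx_perturbed_pinv : (W + dW) *m Wp' = 1%:M.
Proof.
case: W'_pinv => W'K _ _ _; set M := (W + dW) *m Wp' - 1%:M.
have MW' : M *m (W + dW) = 0 by rewrite mulmxBl W'K mul1mx subrr.
have M_eq : M = - (M *m dW *m Wp).
  by rewrite -{1}[M]mulmx1 -W_Wp mulmxA -[W](addrK dW) mulmxBr MW' sub0r mulNmx.
have M_le : fnorm M <= fnorm M * xi.
  rewrite {1}M_eq fnormN; apply: le_trans (fnorm_mulmxr_le _ _) _.
  by rewrite [snorm Wp * _]mulrC mulrA ler_wpM2r ?snorm_ge0 ?fnorm_mulmxr_le.
have : fnorm M <= 0.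
  by move: M_le xi_lt1 (fnorm_ge0 M); move: (fnorm M) xi => a b; nra.
by move=> M_le0; apply/eqP; rewrite -subr_eq0 -fnorm_eq0 eq_le M_le0 fnorm_ge0.
Qed.

Lemma fnorm_sqr_ratio_perturbed_le K (X : 'M[R]_(K, r)) :
  fnorm (X *m W *m Wp') ^+ 2 / fnorm (X *m W *m Wp' *m (W + dW)) ^+ 2 <=
  fnorm X ^+ 2 / fnorm (X *m W) ^+ 2 * ((1 + xi) / (1 - xi)) ^+ 2.
Proof.
case: W'_pinv => W'K Wp'K _ P_sym.
set W' := W + dW in W'K Wp'K P_sym *; set P := Wp' *m W' in P_sym *.
set Y := X *m W; set A := X *m dW; set B := A *m Wp'.
have W'_Wp' : W' *m Wp' = 1%:M := mulmx_perturbed_pinv.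
have P_idem : P *m P = P by rewrite /P mulmxA Wp'K.
have W_eq : W = W' - dW by rewrite addrK.
have X'_eq : Y *m Wp' = X - B.
  by rewrite /Y W_eq mulmxBr mulmxBl -mulmxA W'_Wp' mulmx1.
have B_le : (1 - xi) * fnorm B <= snorm Wp * fnorm (A *m P).
  have BW_eq : B *m W = A *m P - B *m dW.
    by rewrite W_eq mulmxBr /B /P mulmxA.
  have : fnorm B <= (fnorm (A *m P) + fnorm B * snorm dW) * snorm Wp.
    rewrite {1}(_ : B = B *m W *m Wp); last by rewrite -mulmxA W_Wp mulmx1.
    apply: le_trans (fnorm_mulmxr_le _ _) _; rewrite ler_wpM2r ?snorm_ge0 // BW_eq.
    by apply: le_trans (fnormB _ _) _; rewrite lerD2l fnorm_mulmxr_le.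
  lra.
have C_eq : Y - Y *m P = - (A - A *m P).
  rewrite /Y W_eq mulmxBr mulmxBl -mulmxA (mulmxA W') /P mulmxA W'K.
  by rewrite [X *m W' - _]addrC addrKA opprD.
have Z_eq : fnorm (Y *m Wp' *m W') ^+ 2 = fnorm Y ^+ 2 - fnorm (A - A *m P) ^+ 2.
  by rewrite -mulmxA (fnorm_sqr_proj Y P_sym P_idem) C_eq fnormN addrK.
have AP_le : fnorm (A *m P) ^+ 2 + fnorm (A - A *m P) ^+ 2 <= (fnorm X * snorm dW) ^+ 2.
  rewrite -(fnorm_sqr_proj A P_sym P_idem) ler_sqr ?nnegrE ?mulr_ge0 ?fnorm_ge0 ?snorm_ge0 //.
  exact: fnorm_mulmxr_le.
have X_le : fnorm X <= snorm Wp * fnorm Y.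
  by rewrite mulrC -{1}[X]mulmx1 -W_Wp mulmxA fnorm_mulmxr_le.
have X'_le : fnorm (Y *m Wp') <= fnorm X + fnorm B by rewrite X'_eq fnormB.
rewrite Z_eq; apply: sqr_ratio_le; first by rewrite subr_gt0.
by apply: perturbation_sqr_le AP_le X_le X'_le B_le; rewrite ?snorm_ge0 ?fnorm_ge0.
Qed.

Lemma gammaF_perturbation K (X : 'M[R]_(K, r)) :
  gammaF (X *m W *m Wp') (W + dW) <=
  gammaF X W * (1 + fnorm dW / fnorm W) ^+ 2 * ((1 + xi) / (1 - xi)) ^+ 2.
Proof.
rewrite /gammaF mulrAC.
have -> : fnorm X ^+ 2 * fnorm W ^+ 2 / fnorm (X *m W) ^+ 2 *
    (1 + fnorm dW / fnorm W) ^+ 2 * ((1 + xi) / (1 - xi)) ^+ 2 =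
  fnorm X ^+ 2 / fnorm (X *m W) ^+ 2 * ((1 + xi) / (1 - xi)) ^+ 2 *
    (fnorm W * (1 + fnorm dW / fnorm W)) ^+ 2.
  by rewrite exprMn; ring.
apply: ler_pM; rewrite ?divr_ge0 ?sqr_ge0 ?fnorm_sqr_ratio_perturbed_le //.
have W'_le := fnorm_perturbed_le.
by rewrite ler_sqr ?nnegrE ?fnorm_ge0 // (le_trans (fnorm_ge0 _) W'_le).
Qed.

End Perturbation.

Unset Implicit Arguments.

Theorem corollary2 (R : realType) (K n r : nat)
    (y : 'I_n -> 'I_K) (g : 'I_r -> 'I_n)
    (W dW : 'M[R]_(r, n)) (Wp Wp' : 'M[R]_(n, r)) :
  injective g ->
  (forall k : 'I_K, (0 < ncls (fun i => y (g i)) k)%N) ->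
  (forall i j, 0 <= W i j) ->
  (forall j, \sum_(i < r) W i j = 1) ->
  \rank W = r ->
  (forall i j, y (g i) != y j -> W i j = 0) ->
  is_pinv W Wp ->
  is_pinv (W + dW) Wp' ->
  let F := indicator R y in
  let xi := snorm Wp * snorm dW in
  let delta := fnorm dW / fnorm W in
  let nrho := ratio_rho R (ncls y) in
  let rrho := ratio_rho R (ncls (fun i => y (g i))) in
  let gamma := gammaF (F *m Wp) W in
  let gamma' := gammaF (F *m Wp') (W + dW) in
  xi < 1 / nrho ->
  delta <= xi /\
  gamma' <= gamma * (1 + delta) ^+ 2 * ((1 + rrho * xi) / (1 - nrho * xi)) ^+ 2 /\
  gamma * (1 + delta) ^+ 2 * ((1 + rrho * xi) / (1 - nrho * xi)) ^+ 2
    <= gamma * (1 + rrho * xi) ^+ 4 / (1 - nrho * xi) ^+ 2.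
Proof.
move=> _ rpos _ W_sum W_rank W_supp [WK _ _ _] W'_pinv F xi delta nrho rrho gamma gamma'
  xi_lt.
have xi_ge0 : 0 <= xi by rewrite mulr_ge0 ?snorm_ge0.
have [K0|K_gt0] := posnP K.
  by subst K; move: xi_lt; rewrite /nrho /ratio_rho !big_ord0 mul0r sqrtr0 invr0 mulr0; lra.
have ncls_gt0 k : (0 < ncls y k)%N.
  have /card_gt0P [i] := rpos k; rewrite inE => ygi.
  by apply/card_gt0P; exists (g i); rewrite inE.
have nrho_ge1 : 1 <= nrho := ratio_rho_ge1 R K_gt0 ncls_gt0.
have rrho_ge1 : 1 <= rrho := ratio_rho_ge1 R K_gt0 rpos.
have nxi_lt1 : nrho * xi < 1.
  by move: xi_lt; rewrite ltr_pdivlMr ?(lt_le_trans ltr01) // mulrC.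
have xi_lt1 : xi < 1 by apply: le_lt_trans nxi_lt1; rewrite ler_peMl.
have W_Wp : W *m Wp = 1%:M by apply: mulmx_pinv_row_free WK; rewrite /row_free W_rank.
have F_eq : F = indicator R (fun i => y (g i)) *m W := indicator_mulmx W_sum W_supp.
have delta_le : delta <= xi := fnorm_rel_perturbation_le dW W_Wp.
have gamma_ge0 : 0 <= gamma by apply: divr_ge0; [apply: mulr_ge0|]; apply: sqr_ge0.
split => //; split; last first.
  by apply: perturbation_bound_weaken => //; rewrite delta_le andbT divr_ge0 ?fnorm_ge0.
apply: le_trans (_ : gamma * (1 + delta) ^+ 2 * ((1 + xi) / (1 - xi)) ^+ 2 <= _).
  rewrite /gamma' /gamma F_eq -(mulmxA _ W Wp) W_Wp mulmx1.
  exact: gammaF_perturbation.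
apply: ler_wpM2l; first by rewrite mulr_ge0 ?sqr_ge0.
have rxi_ge0 : 0 <= rrho * xi by rewrite mulr_ge0 // (le_trans ler01).
by rewrite ler_sqr ?nnegrE ?perturbation_factor_le // divr_ge0 //; lra.
Qed.
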